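(* Let $a_j$ ($j\ge2$) be formal variables and $f(x)=1+\sum_{j\ge2}a_jx^j\in\mathbb C[[x]]$. Then for every $n\ge1$, $$\frac{[x^{n+2}]f^{n+1}}{n+1}=\frac12\sum_{j=1}^{n-1}\frac{[x^{j+1}]f^{j}}{j}\cdot\frac{[x^{n-j+1}]f^{n-j}}{n-j}+\frac{[x^{n+2}]f^{n}}{n},$$ where $[x^N]g$ denotes the coefficient of $x^N$ in $g$. *)

From mathcomp Require Import all_boot all_order all_algebra.
Set Implicit Arguments. Unset Strict Implicit. Unset Printing Implicit Defensive.
Import GRing.Theory.
Local Open Scope ring_scope.

Definition ftrunc (R : fieldType) (a : nat -> R) (N : nat) : {poly R} :=
  1 + \sum_(2 <= j < N.+1) a j *: 'X^j.

(* [x^N] f^k ; depends only on the truncation of f to degree <= N. *)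
Definition coef_fpow (R : fieldType) (a : nat -> R) (N k : nat) : R :=
  (ftrunc a N ^+ k)`_N.

From mathcomp Require Import all_boot all_order all_algebra.
From mathcomp Require Import zify ring.

Set Implicit Arguments.
Unset Strict Implicit.
Unset Printing Implicit Defensive.
Import GRing.Theory.
Local Open Scope ring_scope.

(* Let g be the inverse of f and G the series defined by G(x g(x)) = g(x), both
   modulo a high power of x. Lagrange inversion gives
   (m - p) [y^m] G^p = - p [x^m] f^(m - p): multiply f^m (G o x g) = f^(m - p) by
   g (f - x f') and take the coefficient of x^m, using that
   [x^(k+1)] f^k (f - x f') = 0. For p = 1 this identifies [x^(j+1)] f^j / j
   with - [y^(j+1)] G, and for p = 2 it identifies [x^(n+2)] f^n / n with
   - [y^(n+2)] G^2 / 2; since G = 1 + O(y^2), expanding the square of G gives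
   the recursion. *)

Section TakePoly.
Variable R : comNzRingType.
Implicit Types (p q f g G Y P Q : {poly R}) (n : nat).

Lemma take_poly_coef n p q i :
  take_poly n p = take_poly n q -> (i < n)%N -> p`_i = q`_i.
Proof.
by move=> pq ltin; have := congr1 (fun r : {poly R} => r`_i) pq; rewrite !coef_take_poly ltin.
Qed.

Lemma take_poly_le k n p q : (k <= n)%N ->
  take_poly n p = take_poly n q -> take_poly k p = take_poly k q.
Proof.
move=> kn pq; apply/polyP => i; rewrite !coef_take_poly.
by case: ifP => // ik; apply: take_poly_coef pq _; apply: leq_trans kn.
Qed.

Lemma take_polyMl n p q : take_poly n (take_poly n p * q) = take_poly n (p * q).
Proof.
by rewrite -[in RHS](poly_take_drop n p) mulrDl take_polyD mulrAC take_polyMXn_0 addr0.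
Qed.

Lemma take_polyMr n p q : take_poly n (p * take_poly n q) = take_poly n (p * q).
Proof. by rewrite mulrC take_polyMl mulrC. Qed.

Lemma take_polyM_eq n p p' q q' :
  take_poly n p = take_poly n p' -> take_poly n q = take_poly n q' ->
  take_poly n (p * q) = take_poly n (p' * q').
Proof.
by move=> pp' qq'; rewrite -take_polyMl pp' take_polyMl -take_polyMr qq' take_polyMr.
Qed.

Lemma take_polyX_eq n p q k :
  take_poly n p = take_poly n q -> take_poly n (p ^+ k) = take_poly n (q ^+ k).
Proof. by move=> pq; elim: k => // k IHk; rewrite !exprS; apply: take_polyM_eq. Qed.

Lemma take_poly_exp_inv n f g k j :
  take_poly n (f * g) = take_poly n 1 -> (j <= k)%N ->
  take_poly n (f ^+ k * g ^+ j) = take_poly n (f ^+ (k - j)).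
Proof.
move=> fg jk; have -> : f ^+ k = f ^+ (k - j) * f ^+ j by rewrite -exprD subnK.
rewrite -mulrA -exprMn -[f ^+ (k - j) in RHS]mulr1; apply: take_polyM_eq => //.
by rewrite (take_polyX_eq j fg) expr1n.
Qed.

Lemma take_polyS_adjust n Y P Q :
  (forall i, (i < n)%N -> Q`_i = 0) -> Q`_n = 1 ->
  take_poly n Y = take_poly n P ->
  take_poly n.+1 (Y + (P`_n - Y`_n) *: Q) = take_poly n.+1 P.
Proof.
move=> Qlow Qn YP; apply/polyP => i; rewrite !coef_take_poly coefD coefZ ltnS.
case: (ltngtP i n) => [ltin|//|->]; last by rewrite Qn mulr1 addrC subrK.
by rewrite Qlow // mulr0 addr0 (take_poly_coef YP).
Qed.

Lemma coef0_exp p k : p`_0 = 1 -> (p ^+ k)`_0 = 1.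
Proof. by move=> p0; rewrite -horner_coef0 horner_exp horner_coef0 p0 expr1n. Qed.

Lemma take_poly_inv_exists n f : f`_0 = 1 ->
  exists g, take_poly n (f * g) = take_poly n 1.
Proof.
move=> f0; elim: n => [|n [g fg]]; first by exists 0; rewrite !take_poly0l.
exists (g + ((1 : {poly R})`_n - (f * g)`_n) *: 'X^n).
rewrite mulrDr -scalerAr; apply: take_polyS_adjust fg => [i ltin|].
  by rewrite coefMXn ltin.
by rewrite coefMXn ltnn subnn.
Qed.

Lemma take_poly_comp_exists n g P : g`_0 = 1 ->
  exists G, take_poly n (G \Po ('X * g)) = take_poly n P.
Proof.
move=> g0; elim: n => [|n [G hG]]; first by exists 0; rewrite !take_poly0l.
exists (G + (P`_n - (G \Po ('X * g))`_n) *: 'X^n).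
rewrite comp_polyD comp_polyZ comp_Xn_poly exprMn.
apply: take_polyS_adjust hG => [i ltin|]; first by rewrite coefXnM ltin.
by rewrite coefXnM ltnn subnn coef0_exp.
Qed.

Lemma coef0_comp p q : q`_0 = 0 -> (p \Po q)`_0 = p`_0.
Proof. by move=> q0; rewrite -!horner_coef0 horner_comp [q.[0]]horner_coef0 q0. Qed.

Lemma coef1_comp p q : q`_0 = 0 -> (p \Po q)`_1 = p`_1 * q`_1.
Proof.
move=> q0; have := coef_deriv (p \Po q) 0.
by rewrite deriv_comp coef0M coef0_comp // !coef_deriv !mulr1n => <-.
Qed.

End TakePoly.

Definition lagrange_factor (R : comNzRingType) (f : {poly R}) : {poly R} :=
  f - 'X * f^`().

Lemma coef_exp_lagrange_factor (R : comNzRingType) (f : {poly R}) r k :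
  (f ^+ r * lagrange_factor f)`_k * r.+1%:R = (f ^+ r.+1)`_k * (r.+1%:R - k%:R).
Proof.
rewrite /lagrange_factor mulrBr coefB -exprSr mulrCA coefXM.
case: k => [|k] /=; first by rewrite !subr0.
rewrite mulrBl.
have -> : (f ^+ r * f^`())`_k * r.+1%:R = (f ^+ r.+1)`_k.+1 * k.+1%:R.
  by rewrite !mulr_natr -coefMn -coef_deriv deriv_exp mulrC.
by ring.
Qed.

Section LagrangeInversion.
Variable R : idomainType.
Hypothesis charR0 : [pchar R] =i pred0.
Implicit Types (f g G : {poly R}).

Lemma char0_natf_neq0 k : (0 < k)%N -> (k%:R : R) != 0.
Proof. by rewrite (pcharf0P _).1 // -lt0n. Qed.

Lemma coef_exp_lagrange_factor_diag f k : (f ^+ k * lagrange_factor f)`_k.+1 = 0.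
Proof.
have /eqP := coef_exp_lagrange_factor f k k.+1.
by rewrite subrr mulr0 mulf_eq0 (negbTE (char0_natf_neq0 _)) // orbF => /eqP.
Qed.

Lemma lagrange_inversion n m p f g G : (m < n)%N -> (p < m)%N ->
  take_poly n (f * g) = take_poly n 1 ->
  take_poly n (G \Po ('X * g)) = take_poly n (g ^+ p) ->
  G`_m * (m - p)%:R = - (p%:R * (f ^+ (m - p))`_m).
Proof.
move=> mn pm /(take_poly_le mn) fg /(take_poly_le mn) hG.
set L := lagrange_factor f.
have via_comp : (f ^+ m * g * L * (G \Po ('X * g)))`_m = (f ^+ (m - p).-1 * L)`_m.
  apply: take_poly_coef (ltnSn m).
  rewrite -take_polyMr hG take_polyMr.
  have -> : f ^+ m * g * L * g ^+ p = f ^+ m * g ^+ p.+1 * L by rewrite exprS; ring.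
  by apply: take_polyM_eq => //; rewrite take_poly_exp_inv // subnS.
have coef_term i : (f ^+ m * g * L * ('X * g) ^+ i)`_m = (i == m)%:R.
  have -> : f ^+ m * g * L * ('X * g) ^+ i = 'X^i * (f ^+ m * g ^+ i.+1 * L).
    by rewrite exprMn exprS; ring.
  rewrite coefXnM; case: (ltngtP m i) => [mi|im|<-].
  - by [].
  - have e : take_poly m.+1 (f ^+ m * g ^+ i.+1 * L) =
               take_poly m.+1 (f ^+ (m - i.+1) * L).
      by apply: take_polyM_eq => //; apply: take_poly_exp_inv.
    rewrite (take_poly_coef e) ?ltnS ?leq_subr // -(subnSK im).
    exact: coef_exp_lagrange_factor_diag.
  - have -> : f ^+ m * g ^+ m.+1 * L = f ^+ m * g ^+ m * (g * L) by rewrite exprS; ring.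
    rewrite subnn coef0M.
    rewrite (take_poly_coef (take_poly_exp_inv fg (leqnn m))) // subnn expr0 coef1 mul1r.
    rewrite coef0M /L /lagrange_factor coefB coefXM subr0 mulrC -coef0M.
    by rewrite (take_poly_coef fg) // coef1.
have via_expansion : (f ^+ m * g * L * (G \Po ('X * g)))`_m = G`_m.
  rewrite comp_polyE mulr_sumr coef_sum.
  under eq_bigr => i _ do rewrite -scalerAr coefZ coef_term mulr_natr mulrb.
  rewrite -big_mkcond big_ord1_eq; case: ifP => // /negbT; rewrite -leqNgt => sizeG.
  by rewrite nth_default.
have := coef_exp_lagrange_factor f (m - p).-1 m.
rewrite prednK ?subn_gt0 // -via_comp via_expansion natrB ?(ltnW pm) // => ->.
ring.
Qed.

End LagrangeInversion.

Lemma coef_sqr_unit_order2 (R : comNzRingType) (G : {poly R}) k :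
  G`_0 = 1 -> G`_1 = 0 ->
  (G ^+ 2)`_(k + 2) =
    2 * G`_(k + 2) + \sum_(1 <= j < k) G`_(j + 1) * G`_(k - j + 1).
Proof.
move=> G0 G1; rewrite expr2 coefM addn2.
rewrite -(big_mkord xpredT (fun i => G`_i * G`_(k.+2 - i))).
rewrite big_nat_recl // big_nat_recl // G0 G1 mul0r subn0 mul1r add0r.
case: k => [|k]; first by rewrite big_nat1 big_geq // subnn G0; ring.
rewrite (big_nat_recr k.+1) // (big_nat_recr k) //=.
rewrite big_add1 subnn subSnn G0 G1 mulr0 mulr1 addr0.
have -> : \sum_(0 <= i < k) G`_i.+2 * G`_(k.+3 - i.+2) =
          \sum_(0 <= i < k) G`_(i.+1 + 1) * G`_(k.+1 - i.+1 + 1).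
  by apply: eq_big_nat => i /andP[_ ik]; congr (G`_ _ * G`_ _); lia.
ring.
Qed.

Lemma coef_ftrunc (R : fieldType) (a : nat -> R) N i :
  (ftrunc a N)`_i = if i == 0%N then 1 else if (1 < i <= N)%N then a i else 0.
Proof.
rewrite /ftrunc coefD coef1 coef_sum.
under eq_bigr do rewrite coefZ coefXn mulr_natr mulrb eq_sym.
by rewrite -big_mkcond big_nat1_eq ltnS; case: i => [|[|i]]; rewrite ?addr0 ?add0r.
Qed.

Lemma coef_fpow_ftrunc (R : fieldType) (a : nat -> R) L k j : (k <= L)%N ->
  coef_fpow a k j = (ftrunc a L ^+ j)`_k.
Proof.
move=> kL; apply: take_poly_coef (ltnSn k); apply: take_polyX_eq.
apply/polyP => i; rewrite !coef_take_poly !coef_ftrunc ltnS.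
by case: ifP => // ik; rewrite ik (leq_trans ik kL).
Qed.

Section InverseSeriesCoefficients.
Variable R : fieldType.
Hypothesis charR0 : [pchar R] =i pred0.
Variables (N : nat) (f g G : {poly R}).
Hypotheses (f0 : f`_0 = 1) (f1 : f`_1 = 0) (N1 : (1 < N)%N).
Hypothesis fg : take_poly N (f * g) = take_poly N 1.
Hypothesis Gg : take_poly N (G \Po ('X * g)) = take_poly N g.

Lemma inverse_coef01 : g`_0 = 1 /\ g`_1 = 0.
Proof.
have fg_coef i : (i <= 1)%N -> (f * g)`_i = (1 : {poly R})`_i.
  by move=> i1; apply: take_poly_coef fg (leq_ltn_trans i1 N1).
have := fg_coef 0%N isT; rewrite coef0M f0 mul1r coef1 => g0; split=> //.
have := fg_coef 1%N isT.
by rewrite coefM big_ord_recr big_ord1 /= subn0 subnn f0 f1 g0 coef1 mul1r mul0r addr0.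
Qed.

Lemma comp_inverse_coef01 : G`_0 = 1 /\ G`_1 = 0.
Proof.
have [g0 g1] := inverse_coef01; have Xg0 : ('X * g)`_0 = 0 by rewrite coefXM.
split; first by rewrite -(coef0_comp G Xg0) (take_poly_coef Gg) ?g0 // ltnW.
by have := take_poly_coef Gg N1; rewrite coef1_comp // coefXM /= g0 mulr1 g1.
Qed.

Lemma lagrange_coef_exp j : (0 < j)%N -> (j.+1 < N)%N ->
  (f ^+ j)`_j.+1 / j%:R = - G`_j.+1.
Proof.
move=> j0 jN; have Gg1 : take_poly N (G \Po ('X * g)) = take_poly N (g ^+ 1).
  by rewrite expr1.
have := lagrange_inversion charR0 jN (j0 : (1 < j.+1)%N) fg Gg1; rewrite subn1 mul1r => E.
by rewrite -[(f ^+ j)`__]opprK -E mulNr mulfK ?(char0_natf_neq0 charR0).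
Qed.

Lemma lagrange_coef_exp2 k : (0 < k)%N -> (k.+2 < N)%N ->
  (f ^+ k)`_k.+2 / k%:R = - (G ^+ 2)`_k.+2 / 2.
Proof.
move=> k0 kN; have Gg2 : take_poly N ((G ^+ 2) \Po ('X * g)) = take_poly N (g ^+ 2).
  by rewrite !expr2 comp_polyM; apply: take_polyM_eq.
have := lagrange_inversion charR0 kN (k0 : (2 < k.+2)%N) fg Gg2; rewrite !subSS subn0 => E.
have -> : (f ^+ k)`_k.+2 = - ((G ^+ 2)`_k.+2 * k%:R) / 2.
  by rewrite E opprK mulrC mulKf // (char0_natf_neq0 charR0).
by field; rewrite !(char0_natf_neq0 charR0).
Qed.

End InverseSeriesCoefficients.

Theorem proposition3p6 (R : fieldType) (hR : [pchar R] =i pred0)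
  (a : nat -> R) (n : nat) (hn : (1 <= n)%N) :
  coef_fpow a (n + 2) (n + 1) / (n + 1)%:R =
    2^-1 * \sum_(1 <= j < n)
             ((coef_fpow a (j + 1) j / j%:R) *
              (coef_fpow a (n - j + 1) (n - j) / (n - j)%:R))
    + coef_fpow a (n + 2) n / n%:R.
Proof.
pose f := ftrunc a (n + 2).
have [f0 f1] : f`_0 = 1 /\ f`_1 = 0 by rewrite !coef_ftrunc.
have N1 : (1 < n + 3)%N by rewrite addn3.
have [g fg] := take_poly_inv_exists (n + 3) f0.
have [g0 _] := inverse_coef01 f0 f1 N1 fg.
have [G Gg] := take_poly_comp_exists (n + 3) g g0.
have [G0 G1] := comp_inverse_coef01 f0 f1 N1 fg Gg.
have coefG j : (0 < j <= n + 1)%N -> coef_fpow a (j + 1) j / j%:R = - G`_(j + 1).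
  case/andP=> j0 jn; have jN : (j + 1 <= n + 2)%N by lia.
  by rewrite (coef_fpow_ftrunc a j jN) addn1 (lagrange_coef_exp hR fg Gg) //; lia.
have -> : coef_fpow a (n + 2) (n + 1) / (n + 1)%:R = - G`_(n + 2).
  by rewrite (_ : n + 2 = n + 1 + 1)%N ?coefG //; lia.
have -> : coef_fpow a (n + 2) n / n%:R = - (G ^+ 2)`_(n + 2) / 2.
  rewrite (coef_fpow_ftrunc a n (leqnn (n + 2))) -/f addn2.
  by rewrite (lagrange_coef_exp2 hR fg Gg) //; lia.
rewrite coef_sqr_unit_order2 //.
rewrite (eq_big_nat _ _ (F2 := fun j => G`_(j + 1) * G`_(n - j + 1))); last first.
  by move=> j /andP[j1 jn]; rewrite !coefG ?mulrNN //; lia.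
by field; rewrite (char0_natf_neq0 hR).
Qed.
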